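(* Let $F:\{0,1\}^4\to\mathbb{Q}_{\ge0}$. Suppose that $F(\overline{e_1}),F(\overline{e_2}),F(\overline{e_3}),F(\overline{e_4})$ are not all zero, that $F(x_1,x_2,x_3,x_4)=0$ whenever $x_1+x_2+x_3+x_4$ is even, and that for all $x_1,x_2,x_3,x_4\in\{0,1\}$, $F(x_1,x_2,x_3,x_4)F(1-x_1,1-x_2,1-x_3,1-x_4)\le F(x_1,x_2,1-x_3,1-x_4)F(1-x_1,1-x_2,x_3,x_4)+F(x_1,1-x_2,x_3,1-x_4)F(1-x_1,x_2,1-x_3,x_4)+F(x_1,1-x_2,1-x_3,x_4)F(1-x_1,x_2,x_3,1-x_4)$. Then $F$ has a matchings circuit.
   Context: $e_i\in\{0,1\}^4$ is the $i$-th unit vector and $\overline{x}$ denotes the complement $(1-x_1,\dots,1-x_4)$. A matchings circuit $G$ consists of: a finite set $J$ of incidences; a finite vertex set $V$ with sets $J_v$ partitioning $J$; a set $A\subseteq J$ of external edges; a partition $E$ of $J\setminus A$ into pairs (internal edges); a rational edge-weight $w(e)\ge0$ for each $e\in E$; and a rational fugacity $\lambda(v)\ge0$ for each $v$. For $F'\subseteq A\cup E$, $\deg_{F'}(v)$ is the number of incidences in $J_v$ belonging to edges of $F'$; $\mathrm{wt}_G(F')=0$ if some $\deg_{F'}(v)\ge2$, else $\prod_{v:\deg_{F'}(v)=0}\lambda(v)\prod_{e\in F'\cap E}w(e)$. The signature $[\![G]\!]:\{0,1\}^A\to\mathbb{Q}_{\ge0}$ is $[\![G]\!](x)=\sum\mathrm{wt}_G(F')$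 over $F'\subseteq A\cup E$ with $F'\cap A=\{a:x_a=1\}$. $F$ has a matchings circuit if $F=[\![G]\!]$ for some $G$ with $A$ identified with $\{1,2,3,4\}$. *)

From HB Require Import structures.
From mathcomp Require Import all_boot all_order all_algebra.
Unset Printing Implicit Defensive.
Import Order.TTheory GRing.Theory Num.Theory.
Local Open Scope ring_scope.

(* A matchings circuit with four external edges.
   - J : incidences; V : vertices; [vtx j] is the vertex whose block J_v
     contains j (so the J_v := vtx^-1(v) partition J).
   - ext : 'I_4 -> J, injective; A := image of ext (identifies A with {1,..,4}).
   - E : internal edges, a partition of J \ A into 2-element sets.
   - w : edge weights (nonnegative on E); lam : fugacities (nonnegative). *)
Record matchings_circuit := MC {
  mc_J : finType;
  mc_V : finType;
  mc_vtx : mc_J -> mc_V;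
  mc_ext : 'I_4 -> mc_J;
  mc_E : {set {set mc_J}};
  mc_w : {set mc_J} -> rat;
  mc_lam : mc_V -> rat;
  mc_ext_inj : injective mc_ext;
  mc_E_pairs : forall e, e \in mc_E -> #|e| = 2%N;
  mc_E_partition : partition mc_E (~: (mc_ext @: [set: 'I_4]));
  mc_w_ge0 : forall e, e \in mc_E -> 0 <= mc_w e;
  mc_lam_ge0 : forall v, 0 <= mc_lam v
}.

(* Incidences belonging to edges of F' = {a : x_a = 1} ∪ S, S ⊆ E. *)
Definition mc_covered (G : matchings_circuit) (x : 'I_4 -> bool)
    (S : {set {set mc_J G}}) : {set mc_J G} :=
  [set mc_ext G i | i in [set i | x i]] :|: cover S.

Definition mc_deg (G : matchings_circuit) (x : 'I_4 -> bool)
    (S : {set {set mc_J G}}) (v : mc_V G) : nat :=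
  #|[set j in mc_covered G x S | mc_vtx G j == v]|.

Definition mc_wt (G : matchings_circuit) (x : 'I_4 -> bool)
    (S : {set {set mc_J G}}) : rat :=
  if [forall v, (mc_deg G x S v <= 1)%N] then
    (\prod_(v | mc_deg G x S v == 0%N) mc_lam G v) * \prod_(e in S) mc_w G e
  else 0.

Definition mc_sig (G : matchings_circuit) (x : 'I_4 -> bool) : rat :=
  \sum_(S in powerset (mc_E G)) mc_wt G x S.

Definition tup4 (x1 x2 x3 x4 : bool) : 'I_4 -> bool :=
  fun i => nth false [:: x1; x2; x3; x4] i.

Definition has_matchings_circuit (F : bool -> bool -> bool -> bool -> rat) :=
  exists G : matchings_circuit,
    forall x1 x2 x3 x4, F x1 x2 x3 x4 = mc_sig G (tup4 x1 x2 x3 x4).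

From HB Require Import structures.
From mathcomp Require Import all_boot all_order all_algebra.
From mathcomp Require Import ring lra.
Import Order.TTheory GRing.Theory Num.Theory.
Local Open Scope ring_scope.

(* The circuit is a gadget on five vertices: vertex i
   (i < 4) carries external edge i, and a centre vertex 4 is joined to each of
   them by an edge of weight w_i := F(e_i-bar); the six pairs {i, j} of outer
   vertices are joined by edges of weight z_{kl} ({k, l} the complementary
   pair).  All fugacities are 0, so the signature counts perfect matchings of
   the vertices not covered by external edges: it vanishes at even inputs, is
   w_i at e_i-bar, and at e_i equals sum_{j <> i} w_j z_{ij} (the centre is
   matched to some j and the remaining two outer vertices to each other).
   Hence we need nonnegative z_{ij} with sum_{j <> i} w_j z_{ij} = F(e_i).
   These come from realizing the numbers g_i := F(e_i) w_i as the weighted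
   degrees of K4: the hypothesis on F at x = e_i says exactly that each g_i is
   at most the sum of the other three, which is the condition for such a
   realization (K4_degree_realization); dividing by w_i w_j (with a correction
   at vertices of weight 0) gives the z_{ij} (K4_weighted_realization). *)

Section K4Realization.
Context {R : realFieldType}.

(* Writing
   d_k := g0 + g_k - g_i - g_j ({i, j, k} = {1, 2, 3}), one takes
   M_0k = (|d_k| + d_k)/4 + t and M_ij = (|d_k| - d_k)/4 + t, where the
   inequalities make t := (sum g - sum |d|)/12 nonnegative. *)
Lemma K4_degree_realization {g0 g1 g2 g3 : R} :
  0 <= g0 -> 0 <= g1 -> 0 <= g2 -> 0 <= g3 ->
  g0 <= g1 + g2 + g3 -> g1 <= g0 + g2 + g3 ->
  g2 <= g0 + g1 + g3 -> g3 <= g0 + g1 + g2 ->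
  exists M01 M02 M03 M12 M13 M23 : R,
   [/\ 0 <= M01, 0 <= M02, 0 <= M03, 0 <= M12 & 0 <= M13] /\ 0 <= M23 /\
   [/\ M01 + M02 + M03 = g0, M01 + M12 + M13 = g1, M02 + M12 + M23 = g2
     & M03 + M13 + M23 = g3].
Proof.
move=> h0 h1 h2 h3 i0 i1 i2 i3.
pose d1 := g0 + g1 - g2 - g3.
pose d2 := g0 + g2 - g1 - g3.
pose d3 := g0 + g3 - g1 - g2.
(* the only use of the triangle-type hypotheses: t >= 0 *)
have slack : `|d1| + `|d2| + `|d3| <= g0 + g1 + g2 + g3.
  have [p1|p1] := lerP 0 d1; have [p2|p2] := lerP 0 d2; have [p3|p3] := lerP 0 d3;
  rewrite ?(ger0_norm p1) ?(ltr0_norm p1) ?(ger0_norm p2) ?(ltr0_norm p2)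
     ?(ger0_norm p3) ?(ltr0_norm p3) /d1 /d2 /d3; lra.
have n1 := ler_norm d1; have n2 := ler_norm d2; have n3 := ler_norm d3.
have m1 := ler_norm (- d1); have m2 := ler_norm (- d2); have m3 := ler_norm (- d3).
rewrite !normrN in m1 m2 m3.
pose t := (g0 + g1 + g2 + g3 - (`|d1| + `|d2| + `|d3|)) / 12.
exists ((`|d1| + d1) / 4 + t), ((`|d2| + d2) / 4 + t), ((`|d3| + d3) / 4 + t),
       ((`|d3| - d3) / 4 + t), ((`|d2| - d2) / 4 + t), ((`|d1| - d1) / 4 + t).
rewrite /t /d1 /d2 /d3 in slack n1 n2 n3 m1 m2 m3 *.
split; [split|split; [|split]]; lra.
Qed.

(* The weight of the edge {i, j} in K4_weighted_realization: the share
   M/(w_i w_j) of the K4 realization of the g_i = a_i w_i, plus a_i/W when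
   w_i = 0 (such a vertex gets nothing from M, so a_i is spread over its
   neighbours in proportion to their weights, W being the total weight). *)
Definition pair_weight (ai aj wi wj M W : R) : R :=
  ((if wi == 0 then ai else 0) + (if wj == 0 then aj else 0)) / W + M / (wi * wj).

Lemma pair_weightC ai aj wi wj M W :
  pair_weight ai aj wi wj M W = pair_weight aj ai wj wi M W.
Proof. by rewrite /pair_weight (addrC (if wi == 0 then _ else _)) (mulrC wi). Qed.

Lemma pair_weight_ge0 ai aj wi wj M W :
  0 <= ai -> 0 <= aj -> 0 <= wi -> 0 <= wj -> 0 <= M -> 0 <= W ->
  0 <= pair_weight ai aj wi wj M W.
Proof.
move=> ai_ge0 aj_ge0 wi_ge0 wj_ge0 M_ge0 W_ge0; rewrite /pair_weight.
apply: addr_ge0; apply: divr_ge0 => //; last exact: mulr_ge0.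
by apply: addr_ge0; case: ifP.
Qed.

Lemma pair_weight_term ai aj wi wj M W : (wj = 0 -> M = 0) ->
  wj * pair_weight ai aj wi wj M W = wj * (if wi == 0 then ai else 0) / W + M / wi.
Proof.
move=> M0; rewrite /pair_weight; have [wj0|wj_neq0] := eqVneq wj 0.
  by rewrite wj0 M0 // !mul0r addr0.
rewrite addr0 mulrDr mulrA; congr (_ + _).
by rewrite invfM mulrCA [wj * _]mulrCA mulfV // mulr1.
Qed.

Lemma pair_weight_row ai wi W wA wB wC aA aB aC MA MB MC :
  W = wi + wA + wB + wC -> 0 < W -> MA + MB + MC = ai * wi ->
  (wA = 0 -> MA = 0) -> (wB = 0 -> MB = 0) -> (wC = 0 -> MC = 0) ->
  wA * pair_weight ai aA wi wA MA W + wB * pair_weight ai aB wi wB MB W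
    + wC * pair_weight ai aC wi wC MC W = ai.
Proof.
move=> defW W_gt0 sumM MA0 MB0 MC0; rewrite !pair_weight_term //.
set c := if wi == 0 then ai else 0.
have -> : wA * c / W + MA / wi + (wB * c / W + MB / wi) + (wC * c / W + MC / wi)
          = (wA + wB + wC) * c / W + (MA + MB + MC) / wi by rewrite !mulrDl; lra.
rewrite sumM /c; have [wi0|wi_neq0] := eqVneq wi 0.
  rewrite wi0 mulr0 mul0r addr0 (_ : wA + wB + wC = W).
    by rewrite mulrAC mulfV ?mul1r // gt_eqF.
  by rewrite defW wi0 add0r.
by rewrite mulr0 mul0r add0r mulfK.
Qed.

Lemma K4_weighted_realization {a0 a1 a2 a3 w0 w1 w2 w3 : R} :
  0 <= a0 -> 0 <= a1 -> 0 <= a2 -> 0 <= a3 ->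
  0 <= w0 -> 0 <= w1 -> 0 <= w2 -> 0 <= w3 -> 0 < w0 + w1 + w2 + w3 ->
  a0 * w0 <= a1 * w1 + a2 * w2 + a3 * w3 -> a1 * w1 <= a0 * w0 + a2 * w2 + a3 * w3 ->
  a2 * w2 <= a0 * w0 + a1 * w1 + a3 * w3 -> a3 * w3 <= a0 * w0 + a1 * w1 + a2 * w2 ->
  exists z01 z02 z03 z12 z13 z23 : R,
   [/\ 0 <= z01, 0 <= z02, 0 <= z03, 0 <= z12 & 0 <= z13] /\ 0 <= z23 /\
   [/\ w1 * z01 + w2 * z02 + w3 * z03 = a0, w0 * z01 + w2 * z12 + w3 * z13 = a1,
       w0 * z02 + w1 * z12 + w3 * z23 = a2 & w0 * z03 + w1 * z13 + w2 * z23 = a3].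
Proof.
move=> a0_ge0 a1_ge0 a2_ge0 a3_ge0 w0_ge0 w1_ge0 w2_ge0 w3_ge0 W_gt0 i0 i1 i2 i3.
have [M01 [M02 [M03 [M12 [M13 [M23 [[p01 p02 p03 p12 p13] [p23 [s0 s1 s2 s3]]]]]]]]] :=
  K4_degree_realization (mulr_ge0 a0_ge0 w0_ge0) (mulr_ge0 a1_ge0 w1_ge0)
    (mulr_ge0 a2_ge0 w2_ge0) (mulr_ge0 a3_ge0 w3_ge0) i0 i1 i2 i3.
set W := w0 + w1 + w2 + w3.
have Z0 : w0 = 0 -> [/\ M01 = 0, M02 = 0 & M03 = 0].
  by move=> e; rewrite e mulr0 in s0; split; lra.
have Z1 : w1 = 0 -> [/\ M01 = 0, M12 = 0 & M13 = 0].
  by move=> e; rewrite e mulr0 in s1; split; lra.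
have Z2 : w2 = 0 -> [/\ M02 = 0, M12 = 0 & M23 = 0].
  by move=> e; rewrite e mulr0 in s2; split; lra.
have Z3 : w3 = 0 -> [/\ M03 = 0, M13 = 0 & M23 = 0].
  by move=> e; rewrite e mulr0 in s3; split; lra.
have W_ge0 : 0 <= W by apply: ltW.
exists (pair_weight a0 a1 w0 w1 M01 W), (pair_weight a0 a2 w0 w2 M02 W),
  (pair_weight a0 a3 w0 w3 M03 W), (pair_weight a1 a2 w1 w2 M12 W),
  (pair_weight a1 a3 w1 w3 M13 W), (pair_weight a2 a3 w2 w3 M23 W).
split; first by split; apply: pair_weight_ge0.
split; first exact: pair_weight_ge0.
split.
- by apply: pair_weight_row; [rewrite /W; ring | done | done | case/Z1 | case/Z2 | case/Z3].
- rewrite (pair_weightC a0 a1).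
  by apply: pair_weight_row; [rewrite /W; ring | done | done | case/Z0 | case/Z2 | case/Z3].
- rewrite (pair_weightC a0 a2) (pair_weightC a1 a2).
  by apply: pair_weight_row; [rewrite /W; ring | done | done | case/Z0 | case/Z1 | case/Z3].
- rewrite (pair_weightC a0 a3) (pair_weightC a1 a3) (pair_weightC a2 a3).
  by apply: pair_weight_row; [rewrite /W; ring | done | done | case/Z0 | case/Z1 | case/Z2].
Qed.
End K4Realization.

(* All bit sequences of length m, enumerated explicitly so that predicates on
   them can be evaluated by computation. *)
Fixpoint bit_seqs (m : nat) : seq (seq bool) :=
  if m is m'.+1 then map (cons true) (bit_seqs m') ++ map (cons false) (bit_seqs m')
  else [:: [::]].

Lemma mem_bit_seqs m p : (p \in bit_seqs m) = (size p == m).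
Proof.
have mem_cons_map b c (q : seq bool) A :
    (b :: q \in map (cons c) A) = (b == c) && (q \in A).
  by apply/mapP/andP => [[r rA [-> ->]]|[/eqP -> qA]]; last exists q.
elim: m p => [|m IH] [|b p] //=; rewrite mem_cat.
  by apply/negbTE/norP; split; apply/mapP => -[].
by case: b; rewrite !mem_cons_map IH eqSS ?orbF.
Qed.

Lemma bit_seqs_uniq m : uniq (bit_seqs m).
Proof.
elim: m => [|m IH] //=; rewrite cat_uniq !map_inj_uniq ?IH ?andbT //; try by move=> ? ? [].
by apply/hasPn => p /mapP [q _ ->]; apply/mapP => -[].
Qed.

Section SubsetsAsBitSequences.
Context {n : nat}.

Definition bits_of (T : {set 'I_n}) : seq bool := [seq i \in T | i <- enum 'I_n].

Definition set_of_bits (p : seq bool) : {set 'I_n} := [set i : 'I_n | nth false p i].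

Lemma nth_bits_of T (i : 'I_n) : nth false (bits_of T) i = (i \in T).
Proof. by rewrite (nth_map i) ?size_enum_ord // nth_ord_enum. Qed.

Lemma size_bits_of T : size (bits_of T) = n.
Proof. by rewrite size_map size_enum_ord. Qed.

Lemma set_of_bitsK T : set_of_bits (bits_of T) = T.
Proof. by apply/setP => i; rewrite inE nth_bits_of. Qed.

Lemma bits_of_setK p : size p = n -> bits_of (set_of_bits p) = p.
Proof.
move=> size_p; rewrite -[RHS](mkseq_nth false) size_p /mkseq -val_enum_ord -map_comp.
by apply: eq_map => i; rewrite /= inE.
Qed.

Lemma sum_over_subsets (V : nmodType) (P : pred (seq bool)) (h : {set 'I_n} -> V) :
  \sum_(T : {set 'I_n} | P (bits_of T)) h T =
  \sum_(p <- bit_seqs n | P p) h (set_of_bits p).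
Proof.
have perm_sets : perm_eq (map set_of_bits (bit_seqs n)) (index_enum {set 'I_n}).
  apply: uniq_perm; rewrite ?index_enum_uniq //.
    rewrite map_inj_in_uniq ?bit_seqs_uniq // => p q.
    rewrite !mem_bit_seqs => /eqP size_p /eqP size_q e.
    by rewrite -(bits_of_setK _ size_p) -(bits_of_setK _ size_q) e.
  move=> T; rewrite mem_index_enum; apply/mapP; exists (bits_of T).
    by rewrite mem_bit_seqs size_bits_of.
  by rewrite set_of_bitsK.
rewrite -(perm_big _ perm_sets) big_map.
rewrite big_seq_cond [RHS]big_seq_cond; apply: eq_bigl => p.
by case: (boolP (p \in _)) => //; rewrite mem_bit_seqs => /eqP/bits_of_setK ->.
Qed.
End SubsetsAsBitSequences.

Lemma sum_ord_count n (P : pred nat) : (\sum_(i < n) P i)%N = count P (iota 0 n).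
Proof.
rewrite -sum1_count -(big_mkord xpredT (fun i => nat_of_bool (P i))) /index_iota subn0.
by rewrite [RHS]big_mkcond; apply: eq_bigr => i _; case: (P i).
Qed.

Lemma forall_ord_all n (P : pred nat) : [forall v : 'I_n, P v] = all P (iota 0 n).
Proof.
rewrite -val_enum_ord all_map; apply/forallP/allP => [h v _|h v]; first exact: h.
by apply: h; rewrite mem_enum.
Qed.

(* Internal edge k < 10 joins vertices gadget_end false k and
   gadget_end true k: edges 0..3 join i to the centre 4, edges 4..9 join the
   outer pairs 01, 02, 03, 12, 13, 23.  Incidences are the external ones
   (inl i, at vertex i) and the two ends (inr (k, b)) of each internal edge. *)
Definition gadget_end (b : bool) (k : nat) : nat :=
  (nth 0 (if b then [:: 4; 4; 4; 4; 1; 2; 3; 2; 3; 3]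
              else [:: 0; 1; 2; 3; 0; 0; 0; 1; 1; 2]) k)%N.

Lemma gadget_end_lt b k : (gadget_end b k < 5)%N.
Proof. by rewrite /gadget_end; case: b; do 10 (case: k => [|k] //); case: k. Qed.

Definition gadget_J : finType := ('I_4 + 'I_10 * bool)%type.

Definition gadget_vtx (j : gadget_J) : 'I_5 :=
  match j with inl i => inord i | inr (k, b) => inord (gadget_end b k) end.

Definition gadget_edge (k : 'I_10) : {set gadget_J} := [set inr (k, false); inr (k, true)].

Definition gadget_E : {set {set gadget_J}} := gadget_edge @: [set: 'I_10].

Definition gadget_w (w : nat -> rat) (e : {set gadget_J}) : rat :=
  \sum_(k | gadget_edge k == e) w k.

Lemma gadget_edge_inj : injective gadget_edge.
Proof.
move=> k1 k2 /setP/(_ (inr (k1, false))); rewrite !inE eqxx /=.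
by case/esym/orP => /eqP [].
Qed.

Lemma gadget_ext_inj : injective (@inl 'I_4 ('I_10 * bool)%type).
Proof. by move=> ? ? []. Qed.

Lemma gadget_E_pairs e : e \in gadget_E -> #|e| = 2%N.
Proof. by case/imsetP => k _ ->; rewrite cards2; case: eqP => // -[]. Qed.

Lemma gadget_E_partition : partition gadget_E (~: (inl @: [set: 'I_4])).
Proof.
apply/and3P; split.
- apply/eqP/setP => j; rewrite /cover [in RHS]inE; apply/bigcupP/idP.
  + case=> _ /imsetP [k _ ->]; rewrite !inE => /orP [] /eqP ->;
    by apply/imsetP => -[].
  + case: j => [i|[k b] _]; first by rewrite imset_f.
    exists (gadget_edge k); first exact: imset_f.
    by rewrite !inE; case: b; rewrite eqxx ?orbT.
- apply/trivIsetP => _ _ /imsetP [k1 _ ->] /imsetP [k2 _ ->] neq.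
  have {neq} k12 : k1 != k2 by apply: contraNneq neq => ->.
  rewrite -setI_eq0; apply/eqP/setP => j; rewrite !inE.
  apply/negbTE/negP => /andP [] /orP [] /eqP -> /orP [] /eqP [] e;
  by rewrite e eqxx in k12.
- by apply/imsetP => -[k _] /setP /(_ (inr (k, true))); rewrite !inE eqxx orbT.
Qed.

Lemma gadget_w_ge0 (w : nat -> rat) :
  (forall k, 0 <= w k) -> forall e, e \in gadget_E -> 0 <= gadget_w w e.
Proof. by move=> w_ge0 e _; apply: sumr_ge0. Qed.

Definition gadget (w : nat -> rat) (w_ge0 : forall k, 0 <= w k) : matchings_circuit :=
  @MC gadget_J 'I_5 gadget_vtx inl gadget_E (gadget_w w) (fun _ => 0)
    gadget_ext_inj gadget_E_pairs gadget_E_partition (gadget_w_ge0 w w_ge0)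
    (fun=> lexx 0).

Definition gadget_deg (xs t : seq bool) (v : nat) : nat :=
  (count (fun i => nth false xs i && (i == v)) (iota 0 4)
   + count (fun k => nth false t k && (gadget_end true k == v)) (iota 0 10)
   + count (fun k => nth false t k && (gadget_end false k == v)) (iota 0 10))%N.

(* With zero fugacities, an edge set contributes iff it is a perfect matching
   of the vertices left free by the external edges. *)
Definition perfect_bits (xs t : seq bool) : bool :=
  all (fun v => gadget_deg xs t v == 1%N) (iota 0 5).

Section GadgetWeights.
Variables (w : nat -> rat) (w_ge0 : forall k, 0 <= w k).
Variables (xs : seq bool) (T : {set 'I_10}).

Let x (i : 'I_4) := nth false xs i.
Let covered := mc_covered (gadget w w_ge0) x (gadget_edge @: T).

Lemma gadget_covered_ext i : (inl i \in covered) = x i.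
Proof.
rewrite !inE /= mem_imset ?inE; last exact: gadget_ext_inj.
case: (x i) => //=; apply/negbTE/negP => /bigcupP [_ /imsetP [k _ ->]].
by rewrite !inE.
Qed.

Lemma gadget_covered_int k b : (inr (k, b) \in covered) = (k \in T).
Proof.
rewrite !inE; apply/orP/idP => [[]|kT].
- by case/imsetP.
- by case/bigcupP => _ /imsetP [k' kT ->]; rewrite !inE => /orP [] /eqP [->].
- right; apply/bigcupP; exists (gadget_edge k); first exact: imset_f.
  by rewrite !inE; case: b; rewrite eqxx ?orbT.
Qed.

Lemma gadget_degE (v : 'I_5) :
  mc_deg (gadget w w_ge0) x (gadget_edge @: T) v = gadget_deg xs (bits_of T) v.
Proof.
rewrite /mc_deg -sum1_card big_mkcond /= big_sumType /=.
set S := [set j in _ | _].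
rewrite (eq_bigr (fun p : 'I_10 * bool => if inr (p.1, p.2) \in S then 1 else 0)%N);
  last by case.
rewrite -(pair_bigA _ (fun k b => if inr (k, b) \in S then 1 else 0)%N) /S.
rewrite /gadget_deg -addnA; congr (_ + _)%N.
  rewrite -sum_ord_count; apply: eq_bigr => i _; rewrite inE gadget_covered_ext.
  by rewrite /= -val_eqE /= inordK //; apply: leq_trans (ltn_ord i) _.
rewrite -!sum_ord_count -big_split /=; apply: eq_bigr => k _.
rewrite big_bool ![_ \in [set _ in _ | _]]inE !gadget_covered_int /= -!val_eqE /= !inordK ?gadget_end_lt //.
by rewrite nth_bits_of; case: (k \in T); case: (_ == _); case: (_ == _).
Qed.

Lemma gadget_wtE :
  mc_wt (gadget w w_ge0) x (gadget_edge @: T) =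
  if perfect_bits xs (bits_of T) then \prod_(k in T) w k else 0.
Proof.
have perfectE : perfect_bits xs (bits_of T) =
    [forall v : 'I_5, gadget_deg xs (bits_of T) v == 1%N].
  by rewrite /perfect_bits -forall_ord_all.
rewrite /mc_wt perfectE; under eq_forallb => v do rewrite gadget_degE.
case: (boolP [forall v : 'I_5, gadget_deg xs (bits_of T) v == 1%N])
  => [/forallP deg1 | /forallPn [v deg_neq1]].
  rewrite (_ : [forall v, _] = true); last by apply/forallP => v; rewrite (eqP (deg1 v)).
  rewrite big_pred0 => [|v]; last by rewrite gadget_degE (eqP (deg1 v)).
  rewrite mul1r big_imset /=; last by move=> ? ? _ _; exact: gadget_edge_inj.
  apply: eq_bigr => k _; rewrite /gadget_w (eq_bigl (pred1 k)) ?big_pred1_eq // => k'.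
  by rewrite /= (inj_eq gadget_edge_inj).
case: ifP => // /forallP deg_le1.
have deg0 : gadget_deg xs (bits_of T) v = 0%N.
  by move: (deg_le1 v) deg_neq1; case: (gadget_deg _ _ v) => [|[|]].
by rewrite (bigD1 v) /= ?gadget_degE ?deg0 // !mul0r.
Qed.
End GadgetWeights.

Lemma gadget_powerset :
  powerset gadget_E = [set gadget_edge @: T | T : {set 'I_10}].
Proof.
apply/setP => S; rewrite powersetE; apply/idP/imsetP => [sub|[T _ ->]].
  exists [set k | gadget_edge k \in S] => //; apply/setP => e.
  apply/idP/imsetP => [eS|[k]]; last by rewrite inE => kS ->.
  by have /imsetP [k _ ek] := subsetP sub e eS; exists k; rewrite // inE -ek.
exact: imsetS (subsetT _).
Qed.

Definition bits_weight (w : nat -> rat) (p : seq bool) : rat :=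
  \prod_(i <- iota 0 10) (if nth false p i then w i else 1).

Lemma prod_set_of_bits (w : nat -> rat) p :
  \prod_(k in (set_of_bits p : {set 'I_10})) w k = bits_weight w p.
Proof.
rewrite big_mkcond /bits_weight -[iota 0 10]/(index_iota 0 10) big_mkord.
by apply: eq_bigr => k _; rewrite inE.
Qed.

Lemma gadget_sigE w w_ge0 xs :
  mc_sig (gadget w w_ge0) (fun i => nth false xs i) =
  \sum_(p <- bit_seqs 10 | perfect_bits xs p) bits_weight w p.
Proof.
rewrite /mc_sig gadget_powerset big_imset /=; last first.
  by move=> ? ? _ _; apply: (imset_inj gadget_edge_inj).
under eq_bigr => T _ do rewrite gadget_wtE.
rewrite -big_mkcond /= sum_over_subsets.
by apply: eq_bigr => p _; rewrite prod_set_of_bits.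
Qed.

(* The signature of the gadget, evaluated: at e_i the centre is matched to
   some j <> i and the other two outer vertices to each other; at e_i-bar
   only the edge {i, centre} remains; at even inputs an odd number of
   vertices is free. *)
Definition gadget_signature (w : nat -> rat) (x1 x2 x3 x4 : bool) : rat :=
  match x1, x2, x3, x4 with
  | true, false, false, false => w 1%N * w 9%N + w 2%N * w 8%N + w 3%N * w 7%N
  | false, true, false, false => w 0%N * w 9%N + w 2%N * w 6%N + w 3%N * w 5%N
  | false, false, true, false => w 0%N * w 8%N + w 1%N * w 6%N + w 3%N * w 4%N
  | false, false, false, true => w 0%N * w 7%N + w 1%N * w 5%N + w 2%N * w 4%N
  | false, true, true, true => w 0%N
  | true, false, true, true => w 1%N
  | true, true, false, true => w 2%N
  | true, true, true, false => w 3%N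
  | _, _, _, _ => 0
  end.

Lemma gadget_signatureE w w_ge0 x1 x2 x3 x4 :
  mc_sig (gadget w w_ge0) (tup4 x1 x2 x3 x4) = gadget_signature w x1 x2 x3 x4.
Proof.
rewrite /tup4 gadget_sigE -big_filter.
case: x1; case: x2; case: x3; case: x4; vm_compute filter;
  rewrite ?big_cons ?big_nil /bits_weight /= ?big_cons ?big_nil /=;
  by rewrite ?mul1r ?mulr1 ?addr0 ?addrA.
Qed.

Theorem lemma20 (F : bool -> bool -> bool -> bool -> rat)
  (Hnn : forall x1 x2 x3 x4, 0 <= F x1 x2 x3 x4)
  (Hnz : ~ [/\ F false true true true = 0, F true false true true = 0,
              F true true false true = 0 & F true true true false = 0])
  (Hpar : forall x1 x2 x3 x4 : bool,
      ~~ odd (x1 + x2 + x3 + x4) -> F x1 x2 x3 x4 = 0)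
  (Hineq : forall x1 x2 x3 x4 : bool,
      F x1 x2 x3 x4 * F (~~ x1) (~~ x2) (~~ x3) (~~ x4) <=
        F x1 x2 (~~ x3) (~~ x4) * F (~~ x1) (~~ x2) x3 x4
      + F x1 (~~ x2) x3 (~~ x4) * F (~~ x1) x2 (~~ x3) x4
      + F x1 (~~ x2) (~~ x3) x4 * F (~~ x1) x2 x3 (~~ x4)) :
  has_matchings_circuit F.
Proof.
have W_gt0 : 0 < F false true true true + F true false true true
                 + F true true false true + F true true true false.
  rewrite lt_def !addr_ge0 ?andbT //; apply/eqP => W0; apply: Hnz.
  by have := Hnn false true true true; have := Hnn true false true true;
     have := Hnn true true false true; have := Hnn true true true false; split; lra.
have i0 := Hineq true false false false; have i1 := Hineq false true false false.
have i2 := Hineq false false true false; have i3 := Hineq false false false true.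
rewrite /= in i0 i1 i2 i3.
have [z01 [z02 [z03 [z12 [z13 [z23 [[? ? ? ? ?] [? [e0 e1 e2 e3]]]]]]]]] :=
  K4_weighted_realization
    (Hnn true false false false) (Hnn false true false false)
    (Hnn false false true false) (Hnn false false false true)
    (Hnn false true true true) (Hnn true false true true)
    (Hnn true true false true) (Hnn true true true false) W_gt0
    ltac:(lra) ltac:(lra) ltac:(lra) ltac:(lra).
(* edges 0..3 to the centre, then the outer pairs 01, 02, 03, 12, 13, 23 *)
pose w k := nth 0 [:: F false true true true; F true false true true;
  F true true false true; F true true true false; z23; z13; z12; z03; z02; z01] k.
have w_ge0 k : 0 <= w k.
  by rewrite /w; do 10 (case: k => [|k] //=); rewrite nth_nil.
exists (gadget w w_ge0) => x1 x2 x3 x4; rewrite gadget_signatureE.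
by case: x1; case: x2; case: x3; case: x4;
  first [by rewrite Hpar | by rewrite /= ?e0 ?e1 ?e2 ?e3].
Qed.
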